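(* Let $X$ and $Y$ be real Banach lattices (nonzero). The following are equivalent: (i) Every uniformly bounded subset $\mathscr{T}\subseteq\mathcal{L}(X,Y)$ is $\ell^2$-bounded. (ii) $X$ is $2$-concave and $Y$ is $2$-convex.
   Context: A family $\mathscr{T}\subseteq\mathcal{L}(X,Y)$ is uniformly bounded if $\sup_{T\in\mathscr{T}}\|T\|<\infty$. It is $\ell^2$-bounded if there is $C\ge0$ with $\|(\sum_{n=1}^N|T_nx_n|^2)^{1/2}\|\le C\|(\sum_{n=1}^N|x_n|^2)^{1/2}\|$ for all $N$, all $x_n\in X$ and all $T_n\in\mathscr{T}$ (square functions via Krivine's calculus). A Banach lattice $X$ is $2$-concave if there is $C_X$ with $(\sum_{n=1}^N\|x_n\|^2)^{1/2}\le C_X\|(\sum_{n=1}^N|x_n|^2)^{1/2}\|$ for all $N$ and $x_1,\dots,x_N\in X$; it is $2$-convex if $\|(\sum_{n=1}^N|x_n|^2)^{1/2}\|\le C_X(\sum_{n=1}^N\|x_n\|^2)^{1/2}$ for all such. *)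

From Stdlib Require Export Reals.
Open Scope R_scope.

Record BanachLattice : Type := {
  BL :> Type;
  bl0 : BL;
  bladd : BL -> BL -> BL;
  blopp : BL -> BL;
  blscal : R -> BL -> BL;
  blle : BL -> BL -> Prop;
  bljoin : BL -> BL -> BL;
  blnorm : BL -> R;
  bl_addA : forall x y z, bladd x (bladd y z) = bladd (bladd x y) z;
  bl_addC : forall x y, bladd x y = bladd y x;
  bl_add0 : forall x, bladd x bl0 = x;
  bl_addN : forall x, bladd x (blopp x) = bl0;
  bl_scalDr : forall a x y, blscal a (bladd x y) = bladd (blscal a x) (blscal a y);
  bl_scalDl : forall a b x, blscal (a + b) x = bladd (blscal a x) (blscal b x);
  bl_scalA : forall a b x, blscal a (blscal b x) = blscal (a * b) x;
  bl_scal1 : forall x, blscal 1 x = x;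
  bl_le_refl : forall x, blle x x;
  bl_le_antisym : forall x y, blle x y -> blle y x -> x = y;
  bl_le_trans : forall x y z, blle x y -> blle y z -> blle x z;
  bl_le_add : forall x y z, blle x y -> blle (bladd x z) (bladd y z);
  bl_le_scal : forall a x y, 0 <= a -> blle x y -> blle (blscal a x) (blscal a y);
  bl_join_l : forall x y, blle x (bljoin x y);
  bl_join_r : forall x y, blle y (bljoin x y);
  bl_join_lub : forall x y z, blle x z -> blle y z -> blle (bljoin x y) z;
  bl_norm_eq0 : forall x, blnorm x = 0 -> x = bl0;
  bl_norm_tri : forall x y, blnorm (bladd x y) <= blnorm x + blnorm y;
  bl_norm_scal : forall a x, blnorm (blscal a x) = Rabs a * blnorm x;
  bl_norm_lattice : forall x y,
    blle (bljoin x (blopp x)) (bljoin y (blopp y)) -> blnorm x <= blnorm y;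
  bl_complete : forall u : nat -> BL,
    (forall eps, 0 < eps -> exists N, forall m n, (N <= m)%nat -> (N <= n)%nat ->
        blnorm (bladd (u m) (blopp (u n))) < eps) ->
    exists l, forall eps, 0 < eps -> exists N, forall n, (N <= n)%nat ->
        blnorm (bladd (u n) (blopp l)) < eps
}.

Arguments bl0 {_}.
Arguments bladd {_}.
Arguments blopp {_}.
Arguments blscal {_}.
Arguments blle {_}.
Arguments bljoin {_}.
Arguments blnorm {_}.

Definition nontrivial (X : BanachLattice) : Prop := exists x : X, x <> bl0.

Fixpoint vsum {X : BanachLattice} (N : nat) (f : nat -> X) : X :=
  match N with
  | O => bl0
  | S n => bladd (vsum n f) (f n)
  end.

Fixpoint rsum (N : nat) (f : nat -> R) : R :=
  match N with
  | O => 0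
  | S n => rsum n f + f n
  end.

(* s = (sum_{n<N} |x_n|^2)^{1/2}, the square function given by Krivine's
   calculus, represented as the (always existing) supremum
   sup { sum_{n<N} a_n x_n : sum_{n<N} a_n^2 <= 1 }  (Lindenstrauss-Tzafriri II, 1.d). *)
Definition sqfun {X : BanachLattice} (N : nat) (x : nat -> X) (s : X) : Prop :=
  (forall a : nat -> R, rsum N (fun n => a n ^ 2) <= 1 ->
      blle (vsum N (fun n => blscal (a n) (x n))) s) /\
  (forall u : X, (forall a : nat -> R, rsum N (fun n => a n ^ 2) <= 1 ->
      blle (vsum N (fun n => blscal (a n) (x n))) u) -> blle s u).

Definition is_linear {X Y : BanachLattice} (T : X -> Y) : Prop :=
  (forall x y, T (bladd x y) = bladd (T x) (T y)) /\
  (forall a x, T (blscal a x) = blscal a (T x)).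

Definition op_bounded_by {X Y : BanachLattice} (T : X -> Y) (M : R) : Prop :=
  forall x, blnorm (T x) <= M * blnorm x.

Definition is_bounded_op {X Y : BanachLattice} (T : X -> Y) : Prop :=
  is_linear T /\ exists M, op_bounded_by T M.

Definition subset_L (X Y : BanachLattice) (fam : (X -> Y) -> Prop) : Prop :=
  forall T, fam T -> is_bounded_op T.

Definition uniformly_bounded {X Y : BanachLattice} (fam : (X -> Y) -> Prop) : Prop :=
  exists M, forall T, fam T -> op_bounded_by T M.

Definition l2_bounded {X Y : BanachLattice} (fam : (X -> Y) -> Prop) : Prop :=
  exists C, 0 <= C /\
    forall (N : nat) (x : nat -> X) (T : nat -> (X -> Y)),
      (forall n, (n < N)%nat -> fam (T n)) ->
      forall (s : X) (t : Y),
        sqfun N x s -> sqfun N (fun n => T n (x n)) t ->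
        blnorm t <= C * blnorm s.

Definition two_concave (X : BanachLattice) : Prop :=
  exists C, forall (N : nat) (x : nat -> X) (s : X), sqfun N x s ->
    sqrt (rsum N (fun n => blnorm (x n) ^ 2)) <= C * blnorm s.

Definition two_convex (X : BanachLattice) : Prop :=
  exists C, forall (N : nat) (x : nat -> X) (s : X), sqfun N x s ->
    blnorm s <= C * sqrt (rsum N (fun n => blnorm (x n) ^ 2)).

(* If X is 2-concave and Y is 2-convex, then for operators of norm at most M
   |(sum |T_n x_n|^2)^(1/2)| <= C_Y (sum |T_n x_n|^2)^(1/2) <= C_Y M (sum |x_n|^2)^(1/2)
   <= C_Y M C_X |(sum |x_n|^2)^(1/2)|.
   Conversely, the rank-one operators z |-> f(z) v with |f|, |v| <= 1 form a uniformly bounded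
   family, and the square function of (r_n v) is (sum r_n^2)^(1/2) |v|.  Sending x_n to |x_n| y
   (y a fixed unit vector) via norming functionals of the x_n yields 2-concavity of X; sending
   |y_n| e (e a unit vector, f a norming functional of e) to y_n yields 2-convexity of Y.
   Norming functionals come from Hahn-Banach, proved by Zorn's lemma: a sublinear functional
   that is minimal below a given one is odd, hence linear. *)
From Stdlib Require Import Reals Lra Lia ClassicalEpsilon FunctionalExtensionality.
From mathcomp Require boolp classical_sets.
Open Scope R_scope.

Section LatticeAlgebra.

Context {X : BanachLattice}.
Implicit Types (x y z v w : X) (a b : R).

Lemma bl_add0l x : bladd bl0 x = x.
Proof. rewrite bl_addC; apply bl_add0. Qed.

Lemma bl_addI x y z : bladd x y = bladd x z -> y = z.
Proof.
  intros H.
  assert (E : bladd (blopp x) (bladd x y) = bladd (blopp x) (bladd x z)) by (rewrite H; reflexivity).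
  rewrite !bl_addA, (bl_addC _ (blopp x) x), bl_addN, !bl_add0l in E. exact E.
Qed.

Lemma bl_addKl x z : bladd (bladd x z) (blopp x) = z.
Proof. rewrite (bl_addC _ x z), <- bl_addA, bl_addN, bl_add0. reflexivity. Qed.

Lemma bl_scal0l x : blscal 0 x = bl0.
Proof. apply (bl_addI (blscal 0 x)). rewrite bl_add0, <- bl_scalDl, Rplus_0_l. reflexivity. Qed.

Lemma bl_scal0r a : blscal a (@bl0 X) = bl0.
Proof. apply (bl_addI (blscal a bl0)). rewrite bl_add0, <- bl_scalDr, bl_add0. reflexivity. Qed.

Lemma bl_oppE x : blopp x = blscal (-1) x.
Proof.
  apply (bl_addI x). rewrite bl_addN. rewrite <- (bl_scal1 _ x) at 1.
  rewrite <- bl_scalDl, Rplus_opp_r, bl_scal0l. reflexivity.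
Qed.

Lemma bl_oppD x y : blopp (bladd x y) = bladd (blopp x) (blopp y).
Proof. rewrite !bl_oppE, bl_scalDr. reflexivity. Qed.

Lemma bl_scalN a x : blscal (- a) x = blopp (blscal a x).
Proof. rewrite bl_oppE, bl_scalA. f_equal; ring. Qed.

Lemma bl_opp0 : blopp (@bl0 X) = bl0.
Proof. rewrite bl_oppE. apply bl_scal0r. Qed.

Lemma bl_norm0 : blnorm (@bl0 X) = 0.
Proof. rewrite <- (bl_scal0l bl0), bl_norm_scal, Rabs_R0. ring. Qed.

Lemma bl_normN x : blnorm (blopp x) = blnorm x.
Proof. rewrite bl_oppE, bl_norm_scal, Rabs_left by lra. ring. Qed.

Lemma bl_norm_ge0 x : 0 <= blnorm x.
Proof. pose proof (bl_norm_tri _ x (blopp x)) as H. rewrite bl_addN, bl_norm0, bl_normN in H. lra. Qed.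

Lemma bl_le_opp x y : blle x y -> blle (blopp y) (blopp x).
Proof.
  intros H. pose proof (bl_le_add _ _ _ (bladd (blopp x) (blopp y)) H) as H1.
  rewrite !bl_addA, bl_addN, bl_add0l, (bl_addC _ y (blopp x)), <- bl_addA, bl_addN, bl_add0 in H1.
  exact H1.
Qed.

Lemma bl_le_add2 x y z w : blle x y -> blle z w -> blle (bladd x z) (bladd y w).
Proof.
  intros H1 H2. apply bl_le_trans with (bladd y z); [now apply bl_le_add|].
  rewrite (bl_addC _ y z), (bl_addC _ y w). now apply bl_le_add.
Qed.

Lemma bl_scal_inv_norm x : blscal (blnorm x) (blscal (/ blnorm x) x) = x.
Proof.
  destruct (Req_dec (blnorm x) 0) as [H0|H0].
  - rewrite (bl_norm_eq0 _ _ H0), !bl_scal0r. reflexivity.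
  - rewrite bl_scalA, Rinv_r, bl_scal1 by exact H0. reflexivity.
Qed.

Lemma bl_norm_scal_inv_norm x : blnorm (blscal (/ blnorm x) x) <= 1.
Proof.
  rewrite bl_norm_scal. pose proof (bl_norm_ge0 x).
  destruct (Req_dec (blnorm x) 0) as [H0|H0].
  - rewrite H0, Rinv_0, Rabs_R0. lra.
  - rewrite Rabs_right by (apply Rle_ge, Rlt_le, Rinv_0_lt_compat; lra). right; field; exact H0.
Qed.

Lemma bl_norm_unit x : x <> bl0 -> blnorm (blscal (/ blnorm x) x) = 1.
Proof.
  intros Hx. assert (Hpos : 0 < blnorm x).
  { destruct (bl_norm_ge0 x) as [H|H]; [exact H|]. exfalso; apply Hx, bl_norm_eq0; auto. }
  rewrite bl_norm_scal, Rabs_right by (apply Rle_ge, Rlt_le, Rinv_0_lt_compat; lra). field; lra.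
Qed.

Definition bl_abs v : X := bljoin v (blopp v).

Lemma bl_abs_ge0 v : blle bl0 (bl_abs v).
Proof.
  pose proof (bl_le_add2 _ _ _ _ (bl_join_l _ v (blopp v)) (bl_join_r _ v (blopp v))) as H.
  rewrite bl_addN in H. apply (bl_le_scal _ (/2)) in H; [|lra].
  rewrite bl_scal0r, <- (bl_scal1 _ (bljoin _ _)), <- bl_scalDl, bl_scalA in H.
  replace (/ 2 * (1 + 1)) with 1 in H by field. rewrite bl_scal1 in H. exact H.
Qed.

Lemma bl_abs_idem v : bl_abs (bl_abs v) = bl_abs v.
Proof.
  apply bl_le_antisym; [|apply bl_join_l].
  apply bl_join_lub; [apply bl_le_refl|]. apply bl_le_trans with bl0; [|apply bl_abs_ge0].
  rewrite <- bl_opp0. apply bl_le_opp, bl_abs_ge0.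
Qed.

Lemma bl_norm_abs v : blnorm (bl_abs v) = blnorm v.
Proof.
  apply Rle_antisym; apply bl_norm_lattice; fold (bl_abs v) (bl_abs (bl_abs v));
  rewrite bl_abs_idem; apply bl_le_refl.
Qed.

Lemma bl_scal_le_abs a b v : Rabs a <= b -> blle (blscal a v) (blscal b (bl_abs v)).
Proof.
  intros H. apply bl_le_trans with (blscal (Rabs a) (bl_abs v)).
  - destruct (Rle_dec 0 a).
    + rewrite Rabs_right by lra. apply bl_le_scal; [lra|apply bl_join_l].
    + rewrite Rabs_left by lra. replace a with (- a * -1) at 1 by ring.
      rewrite <- bl_scalA, <- bl_oppE. apply bl_le_scal; [lra|apply bl_join_r].
  - replace b with (Rabs a + (b - Rabs a)) by ring. rewrite bl_scalDl.
    rewrite <- (bl_add0 _ (blscal (Rabs a) (bl_abs v))) at 1.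
    rewrite !(bl_addC _ (blscal (Rabs a) (bl_abs v))). apply bl_le_add.
    rewrite <- (bl_scal0r (b - Rabs a)). apply bl_le_scal; [lra|apply bl_abs_ge0].
Qed.

End LatticeAlgebra.
Lemma rsum_le (N : nat) (f g : nat -> R) :
  (forall n, (n < N)%nat -> f n <= g n) -> rsum N f <= rsum N g.
Proof.
  induction N as [|N IH]; simpl; intros H; [lra|].
  assert (rsum N f <= rsum N g) by (apply IH; intros; apply H; lia).
  assert (f N <= g N) by (apply H; lia). lra.
Qed.

Lemma rsum_ext (N : nat) (f g : nat -> R) : (forall n, f n = g n) -> rsum N f = rsum N g.
Proof. intros H. induction N; simpl; [reflexivity|]. now rewrite IHN, H. Qed.

Lemma rsum_plus (N : nat) (f g : nat -> R) : rsum N (fun n => f n + g n) = rsum N f + rsum N g.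
Proof. induction N; simpl; [ring|]. rewrite IHN. ring. Qed.

Lemma rsum_scal (N : nat) (c : R) (f : nat -> R) : rsum N (fun n => c * f n) = c * rsum N f.
Proof. induction N; simpl; [ring|]. rewrite IHN. ring. Qed.

Lemma rsum_ge0 (N : nat) (f : nat -> R) : (forall n, 0 <= f n) -> 0 <= rsum N f.
Proof. intros H. induction N; simpl; [lra|]. specialize (H N). lra. Qed.

Lemma vsum_scal {X : BanachLattice} (N : nat) (a r : nat -> R) (v : X) :
  vsum N (fun n => blscal (a n) (blscal (r n) v)) = blscal (rsum N (fun n => a n * r n)) v.
Proof.
  induction N; simpl; [symmetry; apply bl_scal0l|].
  rewrite IHN, bl_scalA, <- bl_scalDl. reflexivity.
Qed.

(* AM-GM termwise: [2 a r <= e a^2 + r^2 / e]. *)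
Lemma rsum_mul_le_AMGM (N : nat) (a r : nat -> R) (e : R) : 0 < e ->
  2 * rsum N (fun n => a n * r n)
  <= e * rsum N (fun n => a n ^ 2) + / e * rsum N (fun n => r n ^ 2).
Proof.
  intros He. rewrite <- !rsum_scal, <- rsum_plus. apply rsum_le. intros n _.
  apply Rmult_le_reg_l with e; [exact He|].
  assert (0 <= (e * a n - r n) ^ 2) by apply pow2_ge_0.
  replace (e * (e * a n ^ 2 + / e * r n ^ 2)) with ((e * a n) ^ 2 + r n ^ 2) by (field; lra).
  nra.
Qed.

Lemma rsum_mul_le_sqrt (N : nat) (a r : nat -> R) :
  rsum N (fun n => a n ^ 2) <= 1 ->
  rsum N (fun n => a n * r n) <= sqrt (rsum N (fun n => r n ^ 2)).
Proof.
  intros Ha. set (S := rsum N (fun n => r n ^ 2)). set (c := rsum N (fun n => a n * r n)).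
  assert (HS : 0 <= S) by (apply rsum_ge0; intros; apply pow2_ge_0).
  assert (Hc : forall e, 0 < e -> 2 * c <= e + / e * S).
  { intros e He. pose proof (rsum_mul_le_AMGM N a r e He). fold c S in H. nra. }
  destruct (Req_dec S 0) as [HS0|HS0].
  - rewrite HS0, sqrt_0. destruct (Rle_dec c 0) as [|Hpos]; [assumption|].
    specialize (Hc c ltac:(lra)). rewrite HS0 in Hc. lra.
  - assert (Hs : 0 < sqrt S) by (apply sqrt_lt_R0; lra).
    specialize (Hc (sqrt S) Hs). pose proof (sqrt_sqrt S HS).
    replace (/ sqrt S * S) with (sqrt S) in Hc by (field_simplify_eq; lra). lra.
Qed.

Lemma rsum_mul_abs_le_sqrt (N : nat) (a r : nat -> R) :
  rsum N (fun n => a n ^ 2) <= 1 ->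
  Rabs (rsum N (fun n => a n * r n)) <= sqrt (rsum N (fun n => r n ^ 2)).
Proof.
  intros Ha. apply Rabs_le. split; [|now apply rsum_mul_le_sqrt].
  assert (Hn : rsum N (fun n => - a n * r n) <= sqrt (rsum N (fun n => r n ^ 2))).
  { apply rsum_mul_le_sqrt. now rewrite (rsum_ext _ _ (fun n => a n ^ 2)) by (intros; ring). }
  rewrite (rsum_ext _ _ (fun n => -1 * (a n * r n))), rsum_scal in Hn by (intros; ring). lra.
Qed.

Lemma sqfun_rank_one {X : BanachLattice} (N : nat) (r : nat -> R) (v : X) :
  sqfun N (fun n => blscal (r n) v) (blscal (sqrt (rsum N (fun n => r n ^ 2))) (bl_abs v)).
Proof.
  set (S := rsum N (fun n => r n ^ 2)).
  assert (HS : 0 <= S) by (apply rsum_ge0; intros; apply pow2_ge_0).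
  split.
  - intros a Ha. rewrite vsum_scal. apply bl_scal_le_abs, rsum_mul_abs_le_sqrt, Ha.
  - intros u Hu. set (s := sqrt S).
    destruct (Req_dec s 0) as [Hs0|Hs0].
    { rewrite Hs0, bl_scal0l. specialize (Hu (fun _ => 0)). rewrite vsum_scal in Hu.
      replace (rsum N (fun n => 0 * r n)) with (0 * rsum N r) in Hu by (rewrite <- rsum_scal; reflexivity).
      rewrite Rmult_0_l, bl_scal0l in Hu. apply Hu.
      replace (rsum N (fun _ => 0 ^ 2)) with (0 * rsum N r)
        by (rewrite <- rsum_scal; apply rsum_ext; intros; ring).
      lra. }
    assert (Hsp : 0 < s) by (pose proof (sqrt_pos S); fold s in H; lra).
    assert (Hs2 : s * s = S) by apply sqrt_sqrt, HS.
    assert (Hsign : forall c, c * c = 1 -> blle (blscal (/ s) (blscal (c * s) v)) (blscal (/ s) u)).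
    { intros c Hc. apply bl_le_scal; [left; apply Rinv_0_lt_compat; lra|].
      assert (Ecross : rsum N (fun n => c / s * r n * r n) = c * s).
      { rewrite (rsum_ext _ _ (fun n => c / s * r n ^ 2)) by (intros; ring).
        rewrite rsum_scal. fold S. rewrite <- Hs2. field. lra. }
      assert (Esq : rsum N (fun n => (c / s * r n) ^ 2) = 1).
      { rewrite (rsum_ext _ _ (fun n => c * c / (s * s) * r n ^ 2)) by (intros; field; lra).
        rewrite rsum_scal. fold S. rewrite <- Hs2, Hc. field. lra. }
      specialize (Hu (fun n => c / s * r n)). rewrite vsum_scal, Ecross in Hu. apply Hu. lra. }
    replace u with (blscal s (blscal (/ s) u))
      by (rewrite bl_scalA, Rinv_r, bl_scal1 by lra; reflexivity).
    apply bl_le_scal; [lra|]. apply bl_join_lub.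
    + specialize (Hsign 1 ltac:(ring)).
      rewrite bl_scalA in Hsign. replace (/ s * (1 * s)) with 1 in Hsign by (field; lra).
      rewrite bl_scal1 in Hsign. exact Hsign.
    + specialize (Hsign (-1) ltac:(ring)).
      rewrite bl_scalA in Hsign. replace (/ s * (-1 * s)) with (-1) in Hsign by (field; lra).
      rewrite <- bl_oppE in Hsign. exact Hsign.
Qed.

Definition rinf (E : R -> Prop) : R :=
  match excluded_middle_informative (bound (fun y => E (- y)) /\ exists y, E (- y)) with
  | left H => - proj1_sig (completeness _ (proj1 H) (proj2 H))
  | right _ => 0
  end.

Lemma rinf_spec (E : R -> Prop) (m : R) :
  (forall e, E e -> m <= e) -> (exists e, E e) ->
  (forall e, E e -> rinf E <= e) /\ (forall b, (forall e, E e -> b <= e) -> b <= rinf E).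
Proof.
  intros Hm [e0 He0]. unfold rinf. destruct excluded_middle_informative as [H|H].
  - destruct (completeness _ _ _) as [l [Hub Hlub]]; simpl. split.
    + intros e He. assert (- e <= l) by (apply Hub; rewrite Ropp_involutive; exact He). lra.
    + intros b Hb. assert (l <= - b) by (apply Hlub; intros y Hy; specialize (Hb _ Hy); lra). lra.
  - exfalso. apply H. split.
    + exists (- m). intros y Hy. specialize (Hm _ Hy). lra.
    + exists (- e0). rewrite Ropp_involutive. exact He0.
Qed.

Lemma rinf_le_add (E1 E2 : R -> Prop) (m1 m2 b : R) :
  (forall e, E1 e -> m1 <= e) -> (exists e, E1 e) ->
  (forall e, E2 e -> m2 <= e) -> (exists e, E2 e) ->
  (forall e1 e2, E1 e1 -> E2 e2 -> b <= e1 + e2) -> b <= rinf E1 + rinf E2.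
Proof.
  intros Hm1 Hne1 Hm2 Hne2 Hb.
  assert (H : forall e2, E2 e2 -> b - e2 <= rinf E1).
  { intros e2 He2. apply (rinf_spec E1 m1 Hm1 Hne1). intros e1 He1. specialize (Hb e1 e2 He1 He2). lra. }
  assert (b - rinf E1 <= rinf E2).
  { apply (rinf_spec E2 m2 Hm2 Hne2). intros e2 He2. specialize (H e2 He2). lra. }
  lra.
Qed.

Lemma rinf_le_scal (E : R -> Prop) (m a b : R) :
  (forall e, E e -> m <= e) -> (exists e, E e) -> 0 < a ->
  (forall e, E e -> b <= a * e) -> b <= a * rinf E.
Proof.
  intros Hm Hne Ha Hb.
  assert (b / a <= rinf E).
  { apply (rinf_spec E m Hm Hne). intros e He. specialize (Hb e He).
    apply Rmult_le_reg_l with a; [exact Ha|]. replace (a * (b / a)) with b by (field; lra). exact Hb. }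
  replace b with (a * (b / a)) by (field; lra). apply Rmult_le_compat_l; lra.
Qed.

Section HahnBanach.

Context {X : BanachLattice}.
Implicit Types (q : X -> R) (x y : X).

Definition sublinear q : Prop :=
  (forall x y, q (bladd x y) <= q x + q y) /\ (forall a x, 0 < a -> q (blscal a x) = a * q x).

Definition linear_functional (f : X -> R) : Prop :=
  (forall x y, f (bladd x y) = f x + f y) /\ (forall a x, f (blscal a x) = a * f x).

Lemma sublinear_intro q :
  (forall x y, q (bladd x y) <= q x + q y) ->
  (forall a x, 0 < a -> q (blscal a x) <= a * q x) -> sublinear q.
Proof.
  intros Hadd Hscal. split; [exact Hadd|]. intros a x Ha. apply Rle_antisym; [now apply Hscal|].
  pose proof (Hscal (/ a) (blscal a x) ltac:(now apply Rinv_0_lt_compat)) as H.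
  rewrite bl_scalA, Rinv_l, bl_scal1 in H by lra.
  apply Rmult_le_compat_l with (r := a) in H; [|lra].
  replace (a * (/ a * q (blscal a x))) with (q (blscal a x)) in H by (field; lra). exact H.
Qed.

Lemma sublinear0 q : sublinear q -> q bl0 = 0.
Proof.
  intros [_ Hscal]. pose proof (Hscal 2 bl0 ltac:(lra)) as H. rewrite bl_scal0r in H. lra.
Qed.

Lemma sublinear_oppN q x : sublinear q -> - q (blopp x) <= q x.
Proof.
  intros Hq. pose proof (proj1 Hq x (blopp x)) as H. rewrite bl_addN, sublinear0 in H by exact Hq. lra.
Qed.

Lemma norm_sublinear : sublinear (@blnorm X).
Proof.
  split; [apply bl_norm_tri|]. intros a x Ha. rewrite bl_norm_scal, Rabs_right by lra. reflexivity.
Qed.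

Lemma linear_of_sublinear_odd q :
  sublinear q -> (forall y, q (blopp y) <= - q y) -> linear_functional q.
Proof.
  intros Hq Hodd.
  assert (HN : forall y, q (blopp y) = - q y).
  { intros y. pose proof (sublinear_oppN q y Hq). pose proof (Hodd y). lra. }
  split.
  - intros x y. apply Rle_antisym; [apply (proj1 Hq)|].
    pose proof (proj1 Hq (blopp x) (blopp y)) as H. rewrite <- bl_oppD, !HN in H. lra.
  - intros a x. destruct (Rtotal_order a 0) as [Ha|[Ha|Ha]].
    + replace a with (- - a) by ring. rewrite bl_scalN, HN, (proj2 Hq) by lra. ring.
    + subst a. rewrite bl_scal0l, sublinear0 by exact Hq. ring.
    + apply (proj2 Hq), Ha.
Qed.

(* One step of the Hahn-Banach argument: the largest sublinear functional below [q] whose value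
   at [-y] is at most [-q y]. *)
Definition push_down_values q y x (e : R) : Prop :=
  exists t, 0 <= t /\ e = q (bladd x (blscal t y)) - t * q y.

Definition push_down q y x : R := rinf (push_down_values q y x).

Lemma push_down_values_lb q y x : sublinear q ->
  forall e, push_down_values q y x e -> - q (blopp x) <= e.
Proof.
  intros Hq e [t [Ht ->]]. pose proof (proj1 Hq (bladd x (blscal t y)) (blopp x)) as H.
  rewrite bl_addKl in H. destruct Ht as [Ht|<-].
  - rewrite (proj2 Hq) in H by exact Ht. lra.
  - rewrite bl_scal0l, sublinear0 in H by exact Hq. rewrite bl_scal0l in *. lra.
Qed.

Lemma push_down_values_ne q y x : exists e, push_down_values q y x e.
Proof. eexists. exists 0. split; [lra|reflexivity]. Qed.

Lemma push_down_le q y x t : sublinear q -> 0 <= t ->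
  push_down q y x <= q (bladd x (blscal t y)) - t * q y.
Proof.
  intros Hq Ht. apply (rinf_spec _ _ (push_down_values_lb q y x Hq) (push_down_values_ne q y x)).
  exists t. split; [exact Ht|reflexivity].
Qed.

Lemma push_down_le_self q y x : sublinear q -> push_down q y x <= q x.
Proof.
  intros Hq. pose proof (push_down_le q y x 0 Hq (Rle_refl 0)) as H.
  rewrite bl_scal0l, bl_add0 in H. lra.
Qed.

Lemma push_down_oppN q y : sublinear q -> push_down q y (blopp y) <= - q y.
Proof.
  intros Hq. pose proof (push_down_le q y (blopp y) 1 Hq ltac:(lra)) as H.
  rewrite bl_scal1, bl_addC, bl_addN, sublinear0 in H by exact Hq. lra.
Qed.

Lemma push_down_sublinear q y : sublinear q -> sublinear (push_down q y).
Proof.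
  intros Hq. pose proof (fun x => push_down_values_lb q y x Hq) as Hlb.
  apply sublinear_intro.
  - intros x1 x2. apply (rinf_le_add _ _ _ _ _ (Hlb x1) (push_down_values_ne q y x1)
      (Hlb x2) (push_down_values_ne q y x2)).
    intros e1 e2 [t1 [Ht1 ->]] [t2 [Ht2 ->]].
    pose proof (push_down_le q y (bladd x1 x2) (t1 + t2) Hq ltac:(lra)) as H.
    pose proof (proj1 Hq (bladd x1 (blscal t1 y)) (bladd x2 (blscal t2 y))) as Hadd.
    replace (bladd (bladd x1 (blscal t1 y)) (bladd x2 (blscal t2 y)))
      with (bladd (bladd x1 x2) (blscal (t1 + t2) y)) in Hadd.
    + lra.
    + rewrite bl_scalDl, !bl_addA. f_equal. rewrite <- !bl_addA. f_equal. apply bl_addC.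
  - intros a x Ha. apply (rinf_le_scal _ _ _ _ (Hlb x) (push_down_values_ne q y x) Ha).
    intros e [t [Ht ->]].
    pose proof (push_down_le q y (blscal a x) (a * t) Hq ltac:(nra)) as H.
    rewrite <- bl_scalA, <- bl_scalDr, (proj2 Hq) in H by exact Ha. lra.
Qed.

Definition pointwise_inf (A : (X -> R) -> Prop) x : R :=
  rinf (fun e => exists q, A q /\ e = q x).

Lemma pointwise_inf_sublinear (A : (X -> R) -> Prop) (m : X -> R) :
  (exists q, A q) -> (forall q, A q -> sublinear q) ->
  (forall q1 q2, A q1 -> A q2 -> (forall x, q1 x <= q2 x) \/ (forall x, q2 x <= q1 x)) ->
  (forall q x, A q -> m x <= q x) ->
  sublinear (pointwise_inf A).
Proof.
  intros [q0 Hq0] Hsub Hchain Hm.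
  assert (Hlb : forall x e, (exists q, A q /\ e = q x) -> m x <= e)
    by (intros x e [q [Hq ->]]; now apply Hm).
  assert (Hne : forall x, exists e, exists q, A q /\ e = q x) by (intros x; eauto).
  assert (Hle : forall q x, A q -> pointwise_inf A x <= q x)
    by (intros q x Hq; apply (rinf_spec _ _ (Hlb x) (Hne x)); eauto).
  apply sublinear_intro.
  - intros x y. apply (rinf_le_add _ _ _ _ _ (Hlb x) (Hne x) (Hlb y) (Hne y)).
    intros e1 e2 [q1 [Hq1 ->]] [q2 [Hq2 ->]].
    destruct (Hchain q1 q2 Hq1 Hq2) as [H12|H21].
    + pose proof (Hle q1 (bladd x y) Hq1). pose proof (proj1 (Hsub q1 Hq1) x y). pose proof (H12 y). lra.
    + pose proof (Hle q2 (bladd x y) Hq2). pose proof (proj1 (Hsub q2 Hq2) x y). pose proof (H21 x). lra.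
  - intros a x Ha. apply (rinf_le_scal _ _ _ _ (Hlb x) (Hne x) Ha).
    intros e [q [Hq ->]]. rewrite <- (proj2 (Hsub q Hq)) by exact Ha. now apply Hle.
Qed.

Lemma exists_minimal_sublinear p0 : sublinear p0 ->
  exists q, sublinear q /\ (forall x, q x <= p0 x) /\
    forall q', sublinear q' -> (forall x, q' x <= q x) -> forall x, q x <= q' x.
Proof.
  intros Hp0.
  set (T := {q : X -> R | sublinear q /\ forall x, q x <= p0 x}).
  set (below := fun s1 s2 : T => boolp.asbool (forall x, proj1_sig s2 x <= proj1_sig s1 x)).
  assert (t0 : T) by (exists p0; split; [exact Hp0|intros; lra]).
  assert (Hlow : forall (s : T) x, - p0 (blopp x) <= proj1_sig s x).
  { intros [q [Hq Hqp]] x. simpl. pose proof (sublinear_oppN q x Hq). pose proof (Hqp (blopp x)). lra. }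
  destruct (@classical_sets.ZL_preorder T t0 below) as [[q [Hq Hqp]] Hmax].
  - intros s. apply boolp.asboolT. intros; lra.
  - intros s1 s2 s3 H12 H23. apply boolp.asboolT. apply boolp.asboolW in H12, H23.
    intros x. specialize (H12 x). specialize (H23 x). lra.
  - intros A Hchain. destruct (classic (exists s, A s)) as [[s0 Hs0]|Hempty].
    2:{ exists t0. intros s Hs. exfalso. eauto. }
    set (B := fun q => exists s, A s /\ q = proj1_sig s).
    assert (HB : sublinear (pointwise_inf B)).
    { apply (pointwise_inf_sublinear B (fun x => - p0 (blopp x))).
      - exists (proj1_sig s0). now exists s0.
      - intros q [s [_ ->]]. exact (proj1 (proj2_sig s)).
      - intros q1 q2 [s1 [Hs1 ->]] [s2 [Hs2 ->]].
        destruct (Hchain s1 s2 Hs1 Hs2) as [H|H]; apply boolp.asboolW in H; auto.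
      - intros q x [s [_ ->]]. apply Hlow. }
    assert (Hle : forall s x, A s -> pointwise_inf B x <= proj1_sig s x).
    { intros s x Hs. unfold pointwise_inf.
      apply (rinf_spec _ (- p0 (blopp x))).
      - intros e [q [[s' [_ ->]] ->]]. apply Hlow.
      - exists (proj1_sig s0 x). exists (proj1_sig s0). split; [now exists s0|reflexivity].
      - exists (proj1_sig s). split; [now exists s|reflexivity]. }
    assert (Hp : forall x, pointwise_inf B x <= p0 x).
    { intros x. pose proof (Hle s0 x Hs0). destruct (proj2_sig s0) as [_ Hs0p]. specialize (Hs0p x). lra. }
    exists (exist _ (pointwise_inf B) (conj HB Hp)). intros s Hs.
    apply boolp.asboolT. intros x. now apply Hle.
  - exists q. split; [exact Hq|split; [exact Hqp|]]. intros q' Hq' Hq'q x.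
    assert (Hq'p : forall z, q' z <= p0 z) by (intros z; pose proof (Hq'q z); pose proof (Hqp z); lra).
    specialize (Hmax (exist _ q' (conj Hq' Hq'p))).
    apply boolp.asboolW in Hmax; [exact (Hmax x)|]. apply boolp.asboolT. exact Hq'q.
Qed.

Lemma minimal_sublinear_oppN q :
  sublinear q -> (forall q', sublinear q' -> (forall x, q' x <= q x) -> forall x, q x <= q' x) ->
  forall y, q (blopp y) <= - q y.
Proof.
  intros Hq Hmin y.
  pose proof (Hmin _ (push_down_sublinear q y Hq) (fun x => push_down_le_self q y x Hq) (blopp y)).
  pose proof (push_down_oppN q y Hq). lra.
Qed.

Lemma hahn_banach (x0 : X) :
  exists f, linear_functional f /\ (forall z, f z <= blnorm z) /\ f x0 = blnorm x0.
Proof.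
  destruct (exists_minimal_sublinear _ (push_down_sublinear _ x0 norm_sublinear))
    as [f [Hf [Hfp Hmin]]].
  pose proof (fun z => push_down_le_self _ x0 z norm_sublinear) as Hpn.
  pose proof (push_down_oppN _ x0 norm_sublinear) as Hpx0.
  assert (Hlin : linear_functional f) by exact (linear_of_sublinear_odd f Hf (minimal_sublinear_oppN f Hf Hmin)).
  exists f. split; [exact Hlin|split].
  - intros z. pose proof (Hfp z). pose proof (Hpn z). lra.
  - pose proof (Hfp x0). pose proof (Hpn x0). pose proof (Hfp (blopp x0)) as Hneg.
    replace (f (blopp x0)) with (- f x0) in Hneg by (rewrite bl_oppE, (proj2 Hlin); ring). lra.
Qed.

End HahnBanach.

Definition norming_functional {X : BanachLattice} (x : X) : X -> R :=
  proj1_sig (constructive_indefinite_description _ (hahn_banach x)).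

Lemma norming_functional_spec {X : BanachLattice} (x : X) :
  linear_functional (norming_functional x) /\
  (forall z, norming_functional x z <= blnorm z) /\ norming_functional x x = blnorm x.
Proof. unfold norming_functional. destruct constructive_indefinite_description as [f Hf]. exact Hf. Qed.

Lemma functional_abs_le_norm {X : BanachLattice} (f : X -> R) :
  linear_functional f -> (forall z, f z <= blnorm z) -> forall z, Rabs (f z) <= blnorm z.
Proof.
  intros Hf Hfn z. pose proof (Hfn z). pose proof (Hfn (blopp z)) as Hneg.
  rewrite bl_normN, bl_oppE, (proj2 Hf) in Hneg. apply Rabs_le. lra.
Qed.

Definition unit_rank_one (X Y : BanachLattice) (T : X -> Y) : Prop :=
  exists f v, linear_functional f /\ (forall z, f z <= blnorm z) /\ blnorm v <= 1 /\
    forall z, T z = blscal (f z) v.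

Lemma unit_rank_one_bounded (X Y : BanachLattice) (T : X -> Y) :
  unit_rank_one X Y T -> op_bounded_by T 1.
Proof.
  intros [f [v [Hf [Hfn [Hv HT]]]]] z. rewrite HT, bl_norm_scal.
  pose proof (functional_abs_le_norm f Hf Hfn z). pose proof (bl_norm_ge0 v).
  pose proof (Rabs_pos (f z)). nra.
Qed.

Lemma unit_rank_one_subset_L (X Y : BanachLattice) : subset_L X Y (unit_rank_one X Y).
Proof.
  intros T HT. split; [|exists 1; now apply unit_rank_one_bounded].
  destruct HT as [f [v [Hf [_ [_ HT]]]]]. split.
  - intros x y. rewrite !HT, (proj1 Hf), bl_scalDl. reflexivity.
  - intros a x. rewrite !HT, (proj2 Hf), bl_scalA. reflexivity.
Qed.

Lemma unit_rank_one_uniformly_bounded (X Y : BanachLattice) :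
  uniformly_bounded (unit_rank_one X Y).
Proof. exists 1. apply unit_rank_one_bounded. Qed.

Lemma two_concave_of_rank_one (X Y : BanachLattice) :
  nontrivial Y -> l2_bounded (unit_rank_one X Y) -> two_concave X.
Proof.
  intros [y0 Hy0] [C [_ HC]]. set (y := blscal (/ blnorm y0) y0).
  assert (Hy : blnorm y = 1) by exact (bl_norm_unit y0 Hy0).
  exists C. intros N x s Hs.
  set (T := fun n z => blscal (norming_functional (x n) z) y).
  assert (HT : forall n, (n < N)%nat -> unit_rank_one X Y (T n)).
  { intros n _. destruct (norming_functional_spec (x n)) as [Hf [Hfn _]].
    exists (norming_functional (x n)), y. split; [exact Hf|split; [exact Hfn|split; [lra|reflexivity]]]. }
  assert (HTx : (fun n => T n (x n)) = (fun n => blscal (blnorm (x n)) y)).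
  { apply functional_extensionality. intros n. unfold T. now rewrite (proj2 (proj2 (norming_functional_spec (x n)))). }
  pose proof (sqfun_rank_one N (fun n => blnorm (x n)) y) as Ht. cbv beta in Ht. rewrite <- HTx in Ht.
  pose proof (HC N x T HT s _ Hs Ht) as H.
  rewrite bl_norm_scal, bl_norm_abs, Hy, Rabs_right in H by apply Rle_ge, sqrt_pos. lra.
Qed.

Lemma two_convex_of_rank_one (X Y : BanachLattice) :
  nontrivial X -> l2_bounded (unit_rank_one X Y) -> two_convex Y.
Proof.
  intros [x0 Hx0] [C [_ HC]]. set (e := blscal (/ blnorm x0) x0).
  assert (He : blnorm e = 1) by exact (bl_norm_unit x0 Hx0).
  destruct (norming_functional_spec e) as [Hf [Hfn Hfe]]. set (f := norming_functional e) in *.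
  rewrite He in Hfe. exists C. intros N y t Ht.
  set (x := fun n => blscal (blnorm (y n)) e).
  set (T := fun n z => blscal (f z) (blscal (/ blnorm (y n)) (y n))).
  assert (HT : forall n, (n < N)%nat -> unit_rank_one X Y (T n)).
  { intros n _. exists f, (blscal (/ blnorm (y n)) (y n)).
    split; [exact Hf|split; [exact Hfn|split; [apply bl_norm_scal_inv_norm|reflexivity]]]. }
  assert (HTx : (fun n => T n (x n)) = y).
  { apply functional_extensionality. intros n. unfold T, x.
    rewrite (proj2 Hf), Hfe, Rmult_1_r. apply bl_scal_inv_norm. }
  rewrite <- HTx in Ht. pose proof (HC N x T HT _ t (sqfun_rank_one N _ e) Ht) as H.
  rewrite bl_norm_scal, bl_norm_abs, He, Rabs_right in H by apply Rle_ge, sqrt_pos. lra.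
Qed.

Lemma sqrt_rsum_sq_le (N : nat) (a b : nat -> R) (M : R) :
  (forall n, (n < N)%nat -> 0 <= a n <= M * b n) -> (forall n, 0 <= b n) ->
  sqrt (rsum N (fun n => a n ^ 2)) <= Rabs M * sqrt (rsum N (fun n => b n ^ 2)).
Proof.
  intros Hab Hb. rewrite <- sqrt_Rsqr_abs, <- sqrt_mult_alt by apply Rle_0_sqr.
  apply sqrt_le_1_alt. rewrite <- rsum_scal. apply rsum_le. intros n Hn.
  specialize (Hab n Hn). specialize (Hb n). unfold Rsqr. nra.
Qed.

Lemma l2_bounded_of_concave_convex (X Y : BanachLattice) (fam : (X -> Y) -> Prop) :
  two_concave X -> two_convex Y -> uniformly_bounded fam -> l2_bounded fam.
Proof.
  intros [CX HX] [CY HY] [M HM].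
  exists (Rabs CY * (Rabs M * Rabs CX)). split.
  { repeat apply Rmult_le_pos; apply Rabs_pos. }
  intros N x T HT s t Hs Ht.
  pose proof (HY N _ t Ht) as Hconv. cbv beta in Hconv. pose proof (HX N x s Hs) as Hconc.
  assert (Hop : sqrt (rsum N (fun n => blnorm (T n (x n)) ^ 2))
                <= Rabs M * sqrt (rsum N (fun n => blnorm (x n) ^ 2))).
  { apply sqrt_rsum_sq_le; [|intros; apply bl_norm_ge0].
    intros n Hn. split; [apply bl_norm_ge0|]. exact (HM _ (HT n Hn) (x n)). }
  pose proof (sqrt_pos (rsum N (fun n => blnorm (T n (x n)) ^ 2))).
  pose proof (sqrt_pos (rsum N (fun n => blnorm (x n) ^ 2))).
  pose proof (bl_norm_ge0 s). pose proof (Rle_abs CY). pose proof (Rle_abs CX).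
  pose proof (Rabs_pos CY). pose proof (Rabs_pos M). pose proof (Rabs_pos CX).
  replace (Rabs CY * (Rabs M * Rabs CX) * blnorm s) with (Rabs CY * (Rabs M * (Rabs CX * blnorm s))) by ring.
  apply Rle_trans with (Rabs CY * sqrt (rsum N (fun n => blnorm (T n (x n)) ^ 2))); [nra|].
  apply Rmult_le_compat_l; [lra|]. apply Rle_trans with (1 := Hop).
  apply Rmult_le_compat_l; [lra|]. nra.
Qed.

Theorem mainTheorem10 (X Y : BanachLattice) (hX : nontrivial X) (hY : nontrivial Y) :
  (forall fam : (X -> Y) -> Prop, subset_L X Y fam ->
     uniformly_bounded fam -> l2_bounded fam)
  <-> (two_concave X /\ two_convex Y).
Proof.
  split.
  - intros Hi.
    pose proof (Hi _ (unit_rank_one_subset_L X Y) (unit_rank_one_uniformly_bounded X Y)) as Hl2.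
    split; [exact (two_concave_of_rank_one X Y hY Hl2)|exact (two_convex_of_rank_one X Y hX Hl2)].
  - intros [Hconc Hconv] fam _. exact (l2_bounded_of_concave_convex X Y fam Hconc Hconv).
Qed.
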